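(* Let $G=(V,E)$ be a multigraph (loops and parallel edges allowed) with $n$ vertices, $m$ edges and $c(G)$ components. Then $$P(\mathcal{H}_G,\lambda)=\lambda^{m-n+2c(G)}\cdot(-1)^{n+c(G)}\cdot T_G\!\left(1-\lambda^2,\tfrac{\lambda-1}{\lambda}\right).$$
   Context: A hypergraph $\mathcal{H}=(\mathcal{V},\mathcal{E})$ consists of a finite vertex set $\mathcal{V}$ and a set $\mathcal{E}$ of subsets of $\mathcal{V}$, each of size at least $1$, called edges. For a positive integer $\lambda$, a weak proper $\lambda$-colouring of $\mathcal{H}$ is a map $\phi:\mathcal{V}\to\{1,\dots,\lambda\}$ such that $|\{\phi(v):v\in e\}|>1$ for every $e\in\mathcal{E}$. $P(\mathcal{H},\lambda)$ denotes the number of weak proper $\lambda$-colourings of $\mathcal{H}$; it is a polynomial in $\lambda$ of degree $|\mathcal{V}|$. For a multigraph $G=(V,E)$, $\mathcal{H}_G$ is the hypergraph with vertex set $V\cup\{w_e:e\in E\}$ (the $w_e$ being distinct new vertices) and edge set $\{\{u_e,v_e,w_e\}: e\in E\}$, where $u_e,v_e$ are the ends of $e$ (so a loop $e$ at $u$ gives the edge $\{u,w_e\}$). The Tutte polynomial is $T_G(x,y)=\sum_{A\subseteq E}(x-1)^{r(E)-r(A)}(y-1)^{|A|-r(A)}$, where $r(A)=|V|-c(A)$ and $c(A)$ is the number of components of the spanning subgraph $(V,A)$; $c(G)=c(E)$. *)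

From HB Require Import structures.
From mathcomp Require Import all_boot all_order all_algebra.
Set Implicit Arguments. Unset Strict Implicit. Unset Printing Implicit Defensive.
Import Order.TTheory GRing.Theory Num.Theory.

Definition weak_proper (W : finType) (edges : {set {set W}}) (lam : nat)
  (phi : {ffun W -> 'I_lam}) : bool :=
  [forall e in edges, 1 < #|[set phi x | x in e]| ].

Definition chrom_hyp (W : finType) (edges : {set {set W}}) (lam : nat) : nat :=
  #|[set phi : {ffun W -> 'I_lam} | @weak_proper W edges lam phi]|.

(* A multigraph: finite vertex type V, finite edge type E, and the two ends
   [u e], [v e] of each edge (a loop has u e = v e; parallel edges allowed). *)

(* The hypergraph H_G: vertices V + E (inr e is the new vertex w_e), edges
   {u_e, v_e, w_e}. *)
Definition HG_edges (V E : finType) (u v : E -> V) : {set {set V + E}} :=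
  [set [set inl (u e); inl (v e); inr e] | e : E].

Definition adj (V E : finType) (u v : E -> V) (A : {set E}) : rel V :=
  fun x y => [exists e in A, ((u e == x) && (v e == y)) || ((u e == y) && (v e == x))].

Definition ncomp (V E : finType) (u v : E -> V) (A : {set E}) : nat :=
  n_comp (adj u v A) V.

Definition rk (V E : finType) (u v : E -> V) (A : {set E}) : nat :=
  #|V| - ncomp u v A.

Local Open Scope ring_scope.

(* Tutte polynomial evaluated at (x, y) in a commutative ring R. The exponents
   r(E) - r(A) and |A| - r(A) are always nonnegative. *)
Definition tutte (R : comNzRingType) (V E : finType) (u v : E -> V) (x y : R) : R :=
  \sum_(A : {set E})
     (x - 1) ^+ (rk u v [set: E] - rk u v A)%N * (y - 1) ^+ (#|A| - rk u v A)%N.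

From HB Require Import structures.
From mathcomp Require Import all_boot all_order all_algebra zify ring.
Set Implicit Arguments. Unset Strict Implicit. Unset Printing Implicit Defensive.
Import Order.TTheory GRing.Theory Num.Theory.

(* Fix the colouring f of the original vertices first: the edge {u_e, v_e, w_e}
   then leaves lam - [f u_e = f v_e] admissible colours for w_e, independently
   for each e.  Expanding the product over the edges gives
   sum_A (-1)^|A| lam^(m - |A|) lam^c(A), because the colourings constant on the
   edges of A are exactly those constant on the components of (V, A).  With
   x - 1 = -lam^2 and y - 1 = -1/lam this is, term by term, the subset expansion
   of the Tutte polynomial times the prefactor.  The matching of exponents needs
   c(E) <= c(A) <= |V| <= |A| + c(A), so that the truncated subtractions in the
   Tutte exponents are genuine; the last inequality holds because each edge at
   most halves the number of 2-colourings constant on the edges. *)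

Section Components.
Variables (V E : finType) (u v : E -> V).
Implicit Types A B : {set E}.

Definition edge_constant (K : finType) (A : {set E}) : {set {ffun V -> K}} :=
  [set f : {ffun V -> K} | [forall e in A, f (u e) == f (v e)]].

Lemma adj_sym A : symmetric (adj u v A).
Proof.
by move=> x y; apply/existsP/existsP => -[e /andP[eA h]]; exists e; rewrite eA orbC.
Qed.

Lemma connect_sym_adj A : connect_sym (adj u v A).
Proof. exact/sym_connect_sym/adj_sym. Qed.

Lemma edge_constant_root K A f :
  f \in edge_constant K A -> forall x, f x = f (fingraph.root (adj u v A) x).
Proof.
rewrite inE => /forall_inP fA x.
have f_closed : closed (adj u v A) [pred y | f y == f x].
  move=> y z /existsP[e /andP[eA /orP[]/andP[/eqP<- /eqP<-]]];
    by rewrite !inE (eqP (fA e eA)).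
have := closed_connect f_closed (connect_root _ x).
by rewrite !inE eqxx => /esym/eqP.
Qed.

Definition comp_root A := {x : V | roots (adj u v A) x}.

Definition root_of A (x : V) : comp_root A :=
  exist _ (fingraph.root (adj u v A) x) (roots_root (connect_sym_adj A) x).

Lemma root_of_val A (r : comp_root A) : root_of A (val r) = r.
Proof. by apply: val_inj; rewrite /= (eqP (valP r)). Qed.

Definition colour_by_root (K : finType) A (g : {ffun comp_root A -> K}) : {ffun V -> K} :=
  [ffun x => g (root_of A x)].

Lemma colour_by_root_inj K A : injective (@colour_by_root K A).
Proof.
move=> g1 g2 /ffunP g12; apply/ffunP => r.
by have := g12 (val r); rewrite !ffunE root_of_val.
Qed.

Lemma edge_constant_colour_by_root K A :
  edge_constant K A = @colour_by_root K A @: [set: {ffun comp_root A -> K}].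
Proof.
apply/setP => f; apply/idP/imsetP => [fA | [g _ ->]].
  exists [ffun r => f (val r)] => //; apply/ffunP => x.
  by rewrite !ffunE -edge_constant_root.
rewrite inE; apply/forall_inP => e eA; rewrite !ffunE.
suff -> : root_of A (u e) = root_of A (v e) by [].
apply: val_inj; apply/eqP; rewrite /= (root_connect (connect_sym_adj A)).
by apply: connect1; apply/existsP; exists e; rewrite eA !eqxx.
Qed.

Lemma card_edge_constant K A : #|edge_constant K A| = (#|K| ^ ncomp u v A)%N.
Proof.
rewrite edge_constant_colour_by_root card_imset; last exact: colour_by_root_inj.
rewrite cardsT card_ffun card_sig; congr (_ ^ _)%N.
by apply: eq_card => x; rewrite !inE andbT.
Qed.

Lemma edge_constant_setU1 K e A :
  edge_constant K (e |: A) =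
  edge_constant K A :&: [set f : {ffun V -> K} | f (u e) == f (v e)].
Proof.
apply/setP => f; rewrite !inE.
apply/forall_inP/andP => [fA | [/forall_inP fA fe] e'].
  split; last by apply: fA; rewrite !inE eqxx.
  by apply/forall_inP => e' e'A; apply: fA; rewrite !inE e'A orbT.
by rewrite !inE => /orP[/eqP-> // | /fA].
Qed.

(* Adding one edge at most halves the number of 2-colourings: translating by
   a fixed colouring that separates the ends of [e] (pointwise xor) maps the
   colourings it separates into those it does not. *)
Lemma card_edge_constant_setU1 e A :
  #|edge_constant bool A| <= 2 * #|edge_constant bool (e |: A)|.
Proof.
set D := [set f in edge_constant bool A | f (u e) != f (v e)].
have -> : edge_constant bool A = edge_constant bool (e |: A) :|: D.
  apply/setP => f; rewrite edge_constant_setU1 !inE.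
  by case: (f (u e) == f (v e)); rewrite ?andbT ?andbF ?orbF.
rewrite (leq_trans (leq_card_setU _ _)) // mul2n -addnn leq_add2l.
have [-> | /set0Pn[g gD]] := eqVneq D set0; first by rewrite cards0.
pose flip (h : {ffun V -> bool}) := [ffun x => h x (+) g x].
have flip_inj : injective flip.
  by move=> h1 h2 /ffunP h12; apply/ffunP => x; have := h12 x; rewrite !ffunE => /addIb.
rewrite -(card_imset _ flip_inj) subset_leq_card //; apply/subsetP => _ /imsetP[h hD ->].
move: hD gD; rewrite edge_constant_setU1 !inE !ffunE.
move=> /andP[/forall_inP hA hn] /andP[/forall_inP gA gn]; apply/andP; split.
  by apply/forall_inP => e' e'A; rewrite !ffunE (eqP (hA e' e'A)) (eqP (gA e' e'A)).
by move: hn gn; case: (h (u e)) (h (v e)) (g (u e)) (g (v e)) => [] [] [] [].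
Qed.

Lemma card_edge_constant_lower_bound (s : seq E) :
  2 ^ #|V| <= 2 ^ size s * #|edge_constant bool [set:: s]|.
Proof.
elim: s => [|e s IHs].
  rewrite set_nil mul1n -(card_bool) -card_ffun subset_leq_card //.
  by apply/subsetP => f _; rewrite inE; apply/forall_inP => e; rewrite inE.
apply: (leq_trans IHs); rewrite set_cons /= expnS (mulnC 2) -mulnA leq_mul2l.
by rewrite card_edge_constant_setU1 orbT.
Qed.

Lemma ncomp_le_card A : ncomp u v A <= #|V|.
Proof. exact: max_card. Qed.

Lemma ncomp_subset A B : A \subset B -> ncomp u v B <= ncomp u v A.
Proof.
move=> /subsetP AB; rewrite -(@leq_exp2l 2) // -card_bool -!card_edge_constant.
apply/subset_leq_card/subsetP => f; rewrite !inE => /forall_inP fB.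
by apply/forall_inP => e /AB; apply: fB.
Qed.

Lemma card_le_ncomp A : #|V| <= #|A| + ncomp u v A.
Proof.
rewrite -(@leq_exp2l 2) // expnD -[in X in _ * X]card_bool -card_edge_constant.
by have := card_edge_constant_lower_bound (enum A); rewrite set_enum -cardE.
Qed.

End Components.

Local Open Scope ring_scope.

Lemma prodr_natb (R : comPzSemiRingType) (I : finType) (P Q : pred I) :
  \prod_(i | P i) ((Q i)%:R : R) = [forall i, P i ==> Q i]%:R.
Proof.
have [/forallP PQ | /forallPn[i]] := boolP [forall i, P i ==> Q i].
  by apply: big1 => i Pi; move: (PQ i); rewrite Pi /= => ->.
by rewrite negb_imply => /andP[Pi /negbTE nQi]; rewrite (bigD1 i) //= nQi mul0r.
Qed.

Lemma card_set3_gt1 (K : finType) (a b c : K) :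
  (1 < #|[set a; b; c]|)%N = ~~ ((a == b) && (a == c)).
Proof.
apply/card_gt1P/idP => [[x [y [xS yS xy]]] | ].
  apply/negP => /andP[/eqP ab /eqP ac].
  by move: xS yS xy; rewrite !inE -ab -ac !orbb => /eqP-> /eqP->; rewrite eqxx.
have [<- | ab] /= := eqVneq a b => [ac | _].
  by exists a, c; rewrite !inE !eqxx ac !orbT.
by exists a, b; rewrite !inE !eqxx ab !orbT.
Qed.

Section Colourings.
Variables (V E : finType) (u v : E -> V) (lam : nat).
Notation K := 'I_lam.

Lemma weak_proper_HG (phi : {ffun V + E -> K}) :
  weak_proper (HG_edges u v) phi =
  [forall e, ~~ ((phi (inl (u e)) == phi (inl (v e))) && (phi (inl (u e)) == phi (inr e)))].
Proof.
apply/forall_inP/forallP => [phiP e | phiP _ /imsetP[e _ ->]].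
  have eH : [set inl (u e); inl (v e); inr e] \in HG_edges u v by apply/imsetP; exists e.
  by have := phiP _ eH; rewrite !imsetU !imset_set1 card_set3_gt1.
by rewrite !imsetU !imset_set1 card_set3_gt1.
Qed.

Definition ffun_sum (fg : {ffun V -> K} * {ffun E -> K}) : {ffun V + E -> K} :=
  [ffun x => match x with inl a => fg.1 a | inr b => fg.2 b end].

Lemma ffun_sum_bij : bijective ffun_sum.
Proof.
exists (fun phi : {ffun V + E -> K} =>
  ([ffun a => phi (inl a)], [ffun b => phi (inr b)]) : {ffun V -> K} * {ffun E -> K}).
  by case=> f g; congr (_, _); apply/ffunP => x; rewrite !ffunE.
by move=> phi; apply/ffunP => -[a | b]; rewrite !ffunE.
Qed.

Lemma sum_not_all_eq (R : pzRingType) (a b : K) :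
  \sum_(c : K) ((~~ ((a == b) && (a == c)))%:R : R) = lam%:R - (a == b)%:R.
Proof.
have [_ | ab] /= := eqVneq a b; last by rewrite sumr_const card_ord subr0.
rewrite (bigD1 a) //= eqxx add0r.
rewrite (eq_bigr (fun _ => 1)) => [|c ca]; last by rewrite eq_sym ca.
by rewrite sumr_const cardC1 card_ord; case: lam a => [[] // | n a]; rewrite -natr1 addrK.
Qed.

Lemma chrom_hyp_HG (R : comPzRingType) :
  (chrom_hyp (HG_edges u v) lam)%:R =
  \sum_(f : {ffun V -> K}) \prod_(e : E) (lam%:R - (f (u e) == f (v e))%:R : R).
Proof.
rewrite /chrom_hyp -sum1_card natr_sum big_mkcond /=.
rewrite (reindex ffun_sum) /=; last exact/onW_bij/ffun_sum_bij.
rewrite -(pair_bigA _ (fun f g => if ffun_sum (f, g) \in _ then 1 else 0)) /=.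
apply: eq_bigr => f _; rewrite -(eq_bigr _ (fun e _ => sum_not_all_eq R _ _)).
rewrite bigA_distr_bigA; apply: eq_bigr => g _.
rewrite inE weak_proper_HG prodr_natb.
by under eq_forallb => e do rewrite !ffunE; case: [forall _, _].
Qed.

Lemma chrom_hyp_HG_subsets (R : comPzRingType) :
  (chrom_hyp (HG_edges u v) lam)%:R =
  \sum_(A : {set E}) ((-1) ^+ #|A| * lam%:R ^+ (#|E| - #|A|) * lam%:R ^+ ncomp u v A : R).
Proof.
rewrite chrom_hyp_HG.
under eq_bigr => f _ do rewrite (eq_bigr _ (fun e _ => addrC _ _)) bigA_distr.
rewrite exchange_big /=; apply: eq_bigr => A _.
have expand_term (f : {ffun V -> K}) :
    \prod_e (if e \in A then - (f (u e) == f (v e))%:R else lam%:R : R) =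
    (-1) ^+ #|A| * lam%:R ^+ (#|E| - #|A|) * (f \in edge_constant u v K A)%:R.
  rewrite (bigID (mem A)) /= (eq_bigr (fun e => - (f (u e) == f (v e))%:R)) => [|e ->] //.
  rewrite [X in _ * X](eq_bigr (fun _ => lam%:R)) => [|e /negbTE-> //].
  rewrite prodrN prodr_natb prodr_const mulrAC inE -(cardsC A) addKn.
  by congr (_ * _ ^+ _ * _); apply: eq_card => e; rewrite !inE.
rewrite (eq_bigr _ (fun f _ => expand_term f)) -mulr_sumr; congr (_ * _).
rewrite -natrX -[in RHS](card_ord lam) -card_edge_constant.
rewrite -sum1_card natr_sum [RHS]big_mkcond.
by apply: eq_bigr => f _; case: ifP.
Qed.

End Colourings.

Lemma subset_term_tutteE (R : fieldType) (L : R) (m n c cA a : nat) :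
  L != 0 -> (c <= cA <= n)%N -> (n <= a + cA)%N -> (a <= m)%N ->
  (-1) ^+ a * L ^+ (m - a) * L ^+ cA =
  L ^ (m%:Z - n%:Z + 2 * c%:Z) * (-1) ^+ (n + c)
  * ((1 - L ^+ 2) - 1) ^+ ((n - c) - (n - cA)) * ((L - 1) / L - 1) ^+ (a - (n - cA)).
Proof.
move=> L0 /andP[c_cA cA_n] n_acA a_m.
have -> : (1 - L ^+ 2) - 1 = - L ^+ 2 by rewrite addrC addKr.
have -> : (L - 1) / L - 1 = - L^-1 by field.
set k := (n - c - (n - cA))%N; set b := (a - (n - cA))%N.
rewrite (exprNn (L ^+ 2)) (exprNn L^-1) exprVn exprnN -exprM.
have -> : forall x y z s1 s2 s3 : R,
    x * s1 * (s2 * y) * (s3 * z) = (s1 * s2 * s3) * (x * y * z).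
  by move=> *; ring.
have -> : (-1) ^+ (n + c) * (-1) ^+ k * (-1) ^+ b = (-1) ^+ a :> R.
  rewrite -!exprD (_ : (n + c + k + b = a + 2 * cA)%N); last by rewrite /k /b; lia.
  by rewrite exprD exprM sqrrN !expr1n mulr1.
rewrite -mulrA -exprD !exprnP -!expfzDr //; congr (_ * _).
congr (L ^ _); rewrite /k /b; lia.
Qed.

Theorem chrom_hyp_HG_tutte (R : fieldType) (V E : finType) (u v : E -> V) (lam : nat) :
  lam%:R != 0 :> R ->
  (chrom_hyp (HG_edges u v) lam)%:R =
    (lam%:R : R) ^ (#|E|%:Z - #|V|%:Z + 2 * (ncomp u v [set: E])%:Z)
    * (-1) ^+ (#|V| + ncomp u v [set: E])%N
    * tutte u v (1 - (lam%:R : R) ^+ 2) ((lam%:R - 1) / lam%:R).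
Proof.
move=> lam_neq0; rewrite chrom_hyp_HG_subsets /tutte mulr_sumr; apply: eq_bigr => A _.
rewrite /rk !mulrA; apply: subset_term_tutteE => //.
- by rewrite ncomp_subset ?subsetT ?ncomp_le_card.
- exact: card_le_ncomp.
- exact: max_card.
Qed.

Theorem theorem2 (V E : finType) (u v : E -> V) (lam : nat) (hlam : (0 < lam)%N) :
  ((chrom_hyp (HG_edges u v) lam)%:R : rat) =
    (lam%:R : rat) ^ (#|E|%:Z - #|V|%:Z + 2 * (ncomp u v [set: E])%:Z)
    * (-1) ^+ (#|V| + ncomp u v [set: E])%N
    * tutte u v (1 - (lam%:R : rat) ^+ 2) (((lam%:R : rat) - 1) / lam%:R).
Proof. by apply: chrom_hyp_HG_tutte; rewrite pnatr_eq0 -lt0n. Qed.
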